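(* Let $\alpha\in(0,1)$ and let $\mathbb{Z}$ act on the circle $\mathbb{T}^1=\mathbb{R}/\mathbb{Z}$ by $n.z=z+n\alpha$. Then the warped cone $(t\mathbb{T}^1,d_{\mathbb{Z}})_{t>0}$ is quasi-isometric to the family of tori $(\mathbb{T}^2,\tau d)_{\tau>0}$ if and only if $\alpha$ is a restricted irrational number.
   Context: $\mathbb{T}^1$ carries its standard quotient metric $d$ (circumference $1$) and $\mathbb{T}^2=\mathbb{R}^2/\mathbb{Z}^2$ its standard flat metric $d$; $\tau d$ denotes the metric scaled by $\tau$. $\mathbb{Z}$ is generated by $S=\{\pm1\}$. For $t>0$, $d_{\mathbb{Z}}$ is the largest metric on $\mathbb{T}^1$ with $d_{\mathbb{Z}}(z,z')\le t\,d(z,z')$ and $d_{\mathbb{Z}}(z,z\pm\alpha)\le 1$. Families $\mathcal{X},\mathcal{Y}$ of metric spaces are quasi-isometric if there are an index set $I$, surjections $i\mapsto X_i\in\mathcal{X}$, $i\mapsto Y_i\in\mathcal{Y}$, and maps $f_i:X_i\to Y_i$ which are $(C,A)$-quasi-isometries (i.e. $C^{-1}d-A\le d(f_i\cdot,f_i\cdot)\le Cd+A$ and $A$-neighbourhood of the image is everything) with $C,A$ independent of $i$. An irrational number $\alpha=[a_0;a_1,a_2,\dots]$ (continued fraction expansion) is restricted if the sequence $(a_i)$ is bounded. *)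

From HB Require Import structures.
From mathcomp Require Import all_boot all_order all_algebra.
From mathcomp Require Import classical_sets reals.
Set Implicit Arguments. Unset Strict Implicit. Unset Printing Implicit Defensive.
Import Order.TTheory GRing.Theory Num.Theory.
Local Open Scope ring_scope.
Local Open Scope classical_set_scope.

Section Defs.
Variable R : realType.

Definition frac (x : R) : R := x - (Num.floor x)%:~R.

Lemma frac_itv (x : R) : (0 <= frac x) && (frac x < 1).
Proof.
rewrite /frac subr_ge0 Num.Theory.floor_le /= ltrBlDr addrC.
by have := Num.Theory.floorD1_gt x; rewrite intrD.
Qed.

(** The circle T^1 = R/Z, represented by its fundamental domain [0,1). *)
Definition T1 := {x : R | (0 <= x) && (x < 1)}.
Definition tpt (x : R) : T1 := exist _ (frac x) (frac_itv x).

Definition T2 := (T1 * T1)%type.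

(** standard quotient metric on T^1 (circumference 1):
    distance from x - y to the nearest integer *)
Definition cdist (x y : R) : R := Num.min (frac (x - y)) (1 - frac (x - y)).
Definition d1 (z z' : T1) : R := cdist (sval z) (sval z').

Definition d2 (p q : T2) : R :=
  Num.sqrt (d1 p.1 q.1 ^+ 2 + d1 p.2 q.2 ^+ 2).

Definition is_metric (X : Type) (d : X -> X -> R) : Prop :=
  (forall x, d x x = 0) /\
  (forall x y, x <> y -> 0 < d x y) /\
  (forall x y, d x y = d y x) /\
  (forall x y z, d x z <= d x y + d y z).

Definition rot (alpha : R) (n : int) (z : T1) : T1 := tpt (sval z + n%:~R * alpha).

(** metrics admissible for the warped metric at parameter t, for the
    generating set S = {1, -1}: d' <= t d and d'(z, s.z) <= 1 *)
Definition warp_admissible (alpha t : R) (d' : T1 -> T1 -> R) : Prop :=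
  is_metric d' /\
  (forall z z', d' z z' <= t * d1 z z') /\
  (forall z, d' z (rot alpha 1 z) <= 1 /\ d' z (rot alpha (-1) z) <= 1).

(** the warped metric d_Z at parameter t: the largest admissible metric,
    i.e. the pointwise supremum of all admissible metrics *)
Definition warped_dist (alpha t : R) (z z' : T1) : R :=
  sup [set d' z z' | d' in warp_admissible alpha t].

Definition qi_map (X Y : Type) (dX : X -> X -> R) (dY : Y -> Y -> R)
  (C A : R) (f : X -> Y) : Prop :=
  (forall x y, C^-1 * dX x y - A <= dY (f x) (f y) <= C * dX x y + A) /\
  (forall y, exists x, dY (f x) y <= A).

(** Quasi-isometry of the families (X, dX s)_{s>0} and (Y, dY s)_{s>0}:
    an index set I with surjections onto both families (i.e. onto the
    parameter ranges (0,+oo), the families being injectively indexed),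
    and uniform (C,A)-quasi-isometries. *)
Definition families_qi (X Y : Type) (dX : R -> X -> X -> R)
  (dY : R -> Y -> Y -> R) : Prop :=
  exists (I : Type) (p q : I -> R),
    (forall i, 0 < p i) /\ (forall t, 0 < t -> exists i, p i = t) /\
    (forall i, 0 < q i) /\ (forall s, 0 < s -> exists i, q i = s) /\
    exists C A : R, 0 < C /\
      forall i, exists f : X -> Y, qi_map (dX (p i)) (dY (q i)) C A f.

(** continued fraction expansion [a_0; a_1, a_2, ...] via the Gauss map:
    x_0 = frac alpha, x_{n+1} = frac (1/x_n); a_0 = floor alpha,
    a_{n+1} = floor (1/x_n). *)
Fixpoint cf_rem (alpha : R) (n : nat) : R :=
  match n with
  | 0%N => frac alpha
  | m.+1 => frac ((cf_rem alpha m)^-1)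
  end.
Definition cf_digit (alpha : R) (n : nat) : int :=
  match n with
  | 0%N => Num.floor alpha
  | m.+1 => Num.floor ((cf_rem alpha m)^-1)
  end.

Definition irrational (alpha : R) : Prop := ~ exists q : rat, alpha = ratr q.

Definition restricted (alpha : R) : Prop :=
  irrational alpha /\ exists M : int, forall n, cf_digit alpha n <= M.

End Defs.

From Pilot Require Import Defs.
From HB Require Import structures.
From mathcomp Require Import all_boot all_order all_algebra.
From mathcomp Require Import classical_sets reals.
From mathcomp Require Import boolp ring lra zify.
Import Order.TTheory GRing.Theory Num.Theory.
Local Open Scope ring_scope.
Local Open Scope classical_set_scope.

(* At scale t the warped metric is, up to uniform constants, the metric that
   the l^1 norm of R^2 induces on the torus R^2 / L_t, where
   L_t = {(j, t (j alpha + m)) : j, m in Z} has covolume t and z is sent to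
   (0, t z): j steps of the rotation cost |j|, and moving along the circle
   costs t times the distance.  A unimodular basis of L_t whose two vectors lie
   in boxes of sizes B1 and B2 with B1 B2 <= K t identifies this torus with the
   rectangular torus R^2 / (B1 Z x B2 Z), with constants depending on K only.

   If the partial quotients of alpha are bounded, the vectors built from two
   consecutive convergent denominators q_n <= sqrt t < q_(n+1) give such a
   basis with B1 = B2 comparable to sqrt t, hence a uniform quasi-isometry onto
   the square torus (T^2, sqrt t d).  If alpha is rational, or has arbitrarily
   large partial quotients, there are scales at which the rectangle has
   arbitrarily large eccentricity B2 / B1.  A quasi-isometry onto a square
   torus of size tau would then force tau to be at least of order B2 by
   comparing diameters, and would send a grid of order tau^2 well separated
   points into distinct unit cells of the B1 x B2 rectangle, of which there are
   only about B1 B2 = B2^2 / (B2 / B1): a contradiction. *)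

Set Implicit Arguments.
Unset Strict Implicit.
Unset Printing Implicit Defensive.

Local Notation frac := Defs.frac.
Local Notation rot := Defs.rot.

Section DistanceToIntegers.
Variable R : realType.
Implicit Types (x y : R) (n : int).

Definition distZ x : R := Num.min (frac x) (1 - frac x).

Lemma frac_ge0 x : 0 <= frac x.
Proof. by case/andP: (frac_itv x). Qed.

Lemma frac_lt1 x : frac x < 1.
Proof. by case/andP: (frac_itv x). Qed.

Lemma frac_shift x : exists n, frac x = x + n%:~R.
Proof. by exists (- Num.floor x); rewrite /frac intrN. Qed.

Lemma fracDz x n : frac (x + n%:~R) = frac x.
Proof. by rewrite /frac floorDrz ?intr_int // intrKfloor intrD; ring. Qed.

Lemma frac_id x : 0 <= x -> x < 1 -> frac x = x.
Proof. by move=> x0 x1; rewrite /frac (@floor_def _ _ 0) ?subr0 ?add0r ?x0. Qed.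

Lemma distZ_le x n : distZ x <= `|x - n%:~R|.
Proof.
have fl := floor_le x; have := floorD1_gt x; rewrite intrD => flS.
rewrite /distZ /frac ge_min; case: (lerP n (Num.floor x)) => hn.
- have : n%:~R <= (Num.floor x)%:~R :> R by rewrite ler_int.
  by move=> le_n; rewrite ger0_norm; lra.
- have : (Num.floor x + 1)%:~R <= n%:~R :> R by rewrite ler_int; lia.
  by rewrite intrD => le_n; rewrite orbC ler0_norm; lra.
Qed.

Lemma distZ_attained x : exists n, distZ x = `|x - n%:~R|.
Proof.
have fl := floor_le x; have := floorD1_gt x; rewrite intrD => flS.
rewrite /distZ /frac.
case: (lerP (x - (Num.floor x)%:~R) (1 - (x - (Num.floor x)%:~R))) => h.
- by exists (Num.floor x); rewrite ger0_norm //; lra.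
- by exists (Num.floor x + 1); rewrite intrD ler0_norm; lra.
Qed.

Lemma distZ_ge0 x : 0 <= distZ x.
Proof. by have [n ->] := distZ_attained x. Qed.

Lemma distZ_le_half x : distZ x <= 2^-1.
Proof.
have f0 := frac_ge0 x; have f1 := frac_lt1 x.
rewrite /distZ ge_min.
by case: (lerP (frac x) 2^-1) => h; apply/orP; [left | right]; lra.
Qed.

Lemma distZ_le_norm x : distZ x <= `|x|.
Proof. by have := distZ_le x 0; rewrite subr0. Qed.

Lemma distZ_int n : distZ n%:~R = 0.
Proof.
by apply/eqP; rewrite eq_le distZ_ge0 andbT -(normr0 R) -(subrr n%:~R) distZ_le.
Qed.

Lemma distZ0 : distZ 0 = 0.
Proof. exact: (distZ_int 0). Qed.

Lemma distZ_half : distZ 2^-1 = 2^-1.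
Proof.
rewrite /distZ frac_id ?invr_ge0 ?invf_lt1 ?ltr1n //.
by rewrite (_ : 1 - 2^-1 = 2^-1) ?minxx //; field.
Qed.

Lemma distZ_eq0 x : distZ x = 0 -> exists n, x = n%:~R.
Proof.
have [n ->] := distZ_attained x => /eqP; rewrite normr_eq0 subr_eq0 => /eqP ->.
by exists n.
Qed.

Lemma distZD_le x y : distZ (x + y) <= distZ x + distZ y.
Proof.
have [m ->] := distZ_attained x; have [n ->] := distZ_attained y.
apply: le_trans (distZ_le _ (m + n)) _; rewrite intrD.
have -> : x + y - (m%:~R + n%:~R) = (x - m%:~R) + (y - n%:~R) by ring.
exact: ler_normD.
Qed.

Lemma distZDz x n : distZ (x + n%:~R) = distZ x.
Proof.
apply/eqP; rewrite eq_le; apply/andP; split.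
  by apply: le_trans (distZD_le _ _) _; rewrite distZ_int addr0.
have -> : x = x + n%:~R + (- n)%:~R by rewrite intrN; ring.
by apply: le_trans (distZD_le _ _) _; rewrite distZ_int !addr0 intrN addrK.
Qed.

Lemma distZN x : distZ (- x) = distZ x.
Proof.
suff le_distZN (y : R) : distZ (- y) <= distZ y.
  by apply/le_anti; rewrite le_distZN /= -{1}[x]opprK le_distZN.
have [n ->] := distZ_attained y.
by apply: le_trans (distZ_le _ (- n)) _; rewrite intrN -opprD normrN.
Qed.

Lemma distZB x y : distZ (x - y) = distZ (y - x).
Proof. by rewrite -distZN opprB. Qed.

Lemma distZ_frac x y : distZ (frac x - frac y) = distZ (x - y).
Proof.
have [m ->] := frac_shift x; have [n ->] := frac_shift y.
have -> : x + m%:~R - (y + n%:~R) = (x - y) + (m - n)%:~R by rewrite intrB; ring.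
exact: distZDz.
Qed.

End DistanceToIntegers.

Section Circle.
Variable R : realType.
Implicit Types (x y : R) (z w : T1 R) (p q : T2 R).

Lemma T1_ge0 z : 0 <= sval z.
Proof. by case/andP: (svalP z). Qed.

Lemma T1_lt1 z : sval z < 1.
Proof. by case/andP: (svalP z). Qed.

Lemma tpt_sval z : tpt (sval z) = z.
Proof. by apply: val_inj; rewrite /= frac_id ?T1_ge0 ?T1_lt1. Qed.

Lemma d1E z w : d1 z w = distZ (sval z - sval w).
Proof. by []. Qed.

Lemma d1_ge0 z w : 0 <= d1 z w.
Proof. exact: distZ_ge0. Qed.

Lemma d1_tpt x y : d1 (tpt x) (tpt y) = distZ (x - y).
Proof. exact: distZ_frac. Qed.

Lemma d1_tptl x w : d1 (tpt x) w = distZ (x - sval w).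
Proof. by rewrite -[w in LHS]tpt_sval d1_tpt. Qed.

Lemma d1C z w : d1 z w = d1 w z.
Proof. exact: distZB. Qed.

Lemma d1_triangle z w u : d1 z u <= d1 z w + d1 w u.
Proof. by rewrite !d1E; apply: le_trans (distZD_le _ _); rewrite subrKA. Qed.

Lemma d2_le_sum p q : d2 p q <= d1 p.1 q.1 + d1 p.2 q.2.
Proof.
have ge0_1 := d1_ge0 p.1 q.1; have ge0_2 := d1_ge0 p.2 q.2.
rewrite -[X in _ <= X]ger0_norm ?addr_ge0 // -sqrtr_sqr ler_sqrt; last first.
  by rewrite sqr_ge0.
by rewrite sqrrD; have := mulr_ge0 ge0_1 ge0_2; lra.
Qed.

Lemma d1_fst_le_d2 p q : d1 p.1 q.1 <= d2 p q.
Proof.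
rewrite -[X in X <= _]ger0_norm ?d1_ge0 // -sqrtr_sqr ler_sqrt.
  by rewrite lerDl sqr_ge0.
by rewrite addr_ge0 ?sqr_ge0.
Qed.

Lemma d1_snd_le_d2 p q : d1 p.2 q.2 <= d2 p q.
Proof. by rewrite /d2 addrC (d1_fst_le_d2 (p.2, p.1) (q.2, q.1)). Qed.

Lemma d2_ge0 p q : 0 <= d2 p q.
Proof. exact: sqrtr_ge0. Qed.

Lemma d2_le1 p q : d2 p q <= 1.
Proof.
apply: le_trans (d2_le_sum p q) _; rewrite !d1E.
have := distZ_le_half (sval p.1 - sval q.1).
by have := distZ_le_half (sval p.2 - sval q.2); lra.
Qed.

Lemma scaled_d2_le_rect (tau b1 b2 : R) p q : 0 <= tau -> tau <= b1 -> tau <= b2 ->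
  tau * d2 p q <= b1 * d1 p.1 q.1 + b2 * d1 p.2 q.2.
Proof.
move=> tau_ge0 tau_b1 tau_b2; have := ler_wpM2l tau_ge0 (d2_le_sum p q).
have := ler_wpM2r (d1_ge0 p.1 q.1) tau_b1; have := ler_wpM2r (d1_ge0 p.2 q.2) tau_b2.
by rewrite mulrDr; lra.
Qed.

Lemma rect_le_scaled_d2 (s b1 b2 : R) p q : 0 <= b1 -> b1 <= s -> b2 <= s ->
  b1 * d1 p.1 q.1 + b2 * d1 p.2 q.2 <= 2 * s * d2 p q.
Proof.
move=> b1_ge0 b1_s b2_s; have s_ge0 : 0 <= s by apply: le_trans b1_s.
have := ler_wpM2r (d1_ge0 p.1 q.1) b1_s; have := ler_wpM2r (d1_ge0 p.2 q.2) b2_s.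
have := ler_wpM2l s_ge0 (d1_fst_le_d2 p q); have := ler_wpM2l s_ge0 (d1_snd_le_d2 p q).
lra.
Qed.

Variable alpha : R.

Lemma rotD (a b : int) z : rot alpha a (rot alpha b z) = rot alpha (b + a) z.
Proof.
apply: val_inj => /=; have [m ->] := frac_shift (sval z + b%:~R * alpha).
have -> : sval z + b%:~R * alpha + m%:~R + a%:~R * alpha =
          sval z + (b + a)%:~R * alpha + m%:~R by rewrite intrD; ring.
exact: fracDz.
Qed.

Lemma rot0 z : rot alpha 0 z = z.
Proof. by rewrite /rot mul0r addr0 tpt_sval. Qed.

Lemma distZ_rot (j : int) z :
  distZ (sval (rot alpha j z) - sval z - j%:~R * alpha) = 0.
Proof.
rewrite /=; have [m ->] := frac_shift (sval z + j%:~R * alpha).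
by rewrite (_ : _ - _ - _ = m%:~R) ?distZ_int //; ring.
Qed.

End Circle.

Section WarpedMetric.
Variables (R : realType) (alpha t : R).
Hypothesis t_gt0 : 0 < t.
Implicit Types (z w : T1 R) (d : T1 R -> T1 R -> R).

Lemma metric_ge0 (X : Type) (d : X -> X -> R) x y : is_metric d -> 0 <= d x y.
Proof.
by move=> [d0 [_ [dC dtri]]]; have := dtri x y x; rewrite d0 (dC y x); lra.
Qed.

Lemma admissible_rot_le d (j : int) z :
  warp_admissible alpha t d -> d z (rot alpha j z) <= `|j%:~R|.
Proof.
move=> [[d0 [_ [_ dtri]]] [_ d_step]].
suff rot_le (n : nat) w :
    d w (rot alpha n w) <= n%:R /\ d w (rot alpha (- n%:Z) w) <= n%:R.
  case: j => n; first by rewrite normr_nat; exact: (rot_le n z).1.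
  by rewrite NegzE intrN normrN -pmulrn normr_nat; exact: (rot_le n.+1 z).2.
elim: n w => [|n IHn] w; first by rewrite oppr0 rot0 d0.
have [le_n le_Nn] := IHn w; have [le_1 _] := d_step (rot alpha n w).
have [_ le_N1] := d_step (rot alpha (- n%:Z) w).
rewrite -natr1; split.
- have -> : rot alpha n.+1 w = rot alpha 1 (rot alpha n w).
    by rewrite rotD; congr (rot _ _ _); lia.
  exact: le_trans (dtri _ _ _) (lerD le_n le_1).
- have -> : rot alpha (- n.+1%:Z) w = rot alpha (-1) (rot alpha (- n%:Z) w).
    by rewrite rotD; congr (rot _ _ _); lia.
  exact: le_trans (dtri _ _ _) (lerD le_Nn le_N1).
Qed.

Lemma admissible_le d z w (j : int) : warp_admissible alpha t d ->
  d z w <= `|j%:~R| + t * distZ (sval w - sval z - j%:~R * alpha).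
Proof.
move=> d_adm; have [[_ [_ [_ dtri]]] [d_le _]] := d_adm.
apply: le_trans (dtri _ (rot alpha j z) _) (lerD (admissible_rot_le _ _ d_adm) _).
apply: le_trans (d_le _ _) _.
by rewrite ler_pM2l // /rot d1_tptl -distZN opprB opprD addrA.
Qed.

Lemma warped_dist_le z w (j : int) :
  warped_dist alpha t z w <= `|j%:~R| + t * distZ (sval w - sval z - j%:~R * alpha).
Proof.
rewrite /warped_dist.
have [->|/set0P ne] := eqVneq [set d z w | d in warp_admissible alpha t] set0.
  by rewrite sup0 addr_ge0 ?mulr_ge0 ?distZ_ge0 ?(ltW t_gt0).
by apply: ge_sup => // _ [d d_adm <-]; exact: admissible_le.
Qed.

Lemma admissible_le_warped_dist d z w :
  warp_admissible alpha t d -> d z w <= warped_dist alpha t z w.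
Proof.
move=> d_adm; apply: sup_upper_bound; last by exists d.
split; first by exists (d z w), d.
by exists (t * d1 z w) => _ [d' [_ [d'_le _]] <-].
Qed.

Lemma warped_dist_ge0 z w : 0 <= warped_dist alpha t z w.
Proof.
have := admissible_le_warped_dist z w; rewrite /warped_dist => le_sup.
have [->|/set0P [_ [d d_adm _]]] :=
  eqVneq [set d z w | d in warp_admissible alpha t] set0; first by rewrite sup0.
apply: le_trans (le_sup d d_adm).
by case: d_adm => d_metric _; exact: metric_ge0.
Qed.

End WarpedMetric.

Section Packing.
Variable R : realType.

Lemma qi_map_A_ge0 (X Y : Type) (dX : X -> X -> R) (dY : Y -> Y -> R) C A f (y : Y) :
  (forall p q, 0 <= dY p q) -> qi_map dX dY C A f -> 0 <= A.
Proof. by move=> dY_ge0 [_ /(_ y) [x]]; apply: le_trans. Qed.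

Lemma truncn_frac_lt (P : nat) (a : R) : (Num.truncn (P.+1%:R * frac a) < P.+1)%N.
Proof.
by rewrite ltnS truncn_le_nat -[X in _ < X]mulr1 ltr_pM2l ?ltr0Sn // frac_lt1.
Qed.

Lemma same_cell_close (P : nat) (a b : R) :
    Num.truncn (P.+1%:R * frac a) = Num.truncn (P.+1%:R * frac b) ->
  P.+1%:R * distZ (a - b) < 1.
Proof.
have P_gt0 : 0 < P.+1%:R :> R by rewrite ltr0Sn.
set p := P.+1%:R in P_gt0 *.
have /andP[a_lo a_hi] := truncn_itv (mulr_ge0 (ltW P_gt0) (frac_ge0 a)).
have /andP[b_lo b_hi] := truncn_itv (mulr_ge0 (ltW P_gt0) (frac_ge0 b)).
move=> same; rewrite same in a_lo a_hi; rewrite -!natr1 in a_hi b_hi.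
rewrite -distZ_frac; apply: le_lt_trans (_ : p * `|frac a - frac b| < 1).
  by rewrite ler_pM2l // distZ_le_norm.
by rewrite -(gtr0_norm P_gt0) -normrM mulrBr ltr_norml; apply/andP; split; lra.
Qed.

Lemma separated_card_le (U : finType) (x y : U -> R) (b1 b2 : R) :
    0 <= b1 -> 0 <= b2 ->
    (forall u v, u != v -> 2 <= b1 * distZ (x u - x v) + b2 * distZ (y u - y v)) ->
  (#|U| <= (Num.truncn b1).+1 * (Num.truncn b2).+1)%N.
Proof.
move=> b1_ge0 b2_ge0 sep.
pose cell u : 'I_(Num.truncn b1).+1 * 'I_(Num.truncn b2).+1 :=
  (inord (Num.truncn ((Num.truncn b1).+1%:R * frac (x u))),
   inord (Num.truncn ((Num.truncn b2).+1%:R * frac (y u)))).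
suff /leq_card : injective cell by rewrite card_prod !card_ord.
move=> u v [/(congr1 val) + /(congr1 val)].
rewrite /= !inordK ?truncn_frac_lt // => /same_cell_close x_close /same_cell_close y_close.
case: (eqVneq u v) => // /sep sep_uv; exfalso.
have b1_le := ltW (truncnS_gt b1); have b2_le := ltW (truncnS_gt b2).
have := ler_wpM2r (distZ_ge0 (x u - x v)) b1_le.
have := ler_wpM2r (distZ_ge0 (y u - y v)) b2_le.
lra.
Qed.

Definition grid (N : nat) (u : 'I_N * 'I_N) : T2 R :=
  (tpt (u.1%:R / N%:R), tpt (u.2%:R / N%:R)).

Lemma grid_sep (N : nat) (i j : 'I_N) : i != j ->
  1 <= N%:R * distZ (i%:R / N%:R - j%:R / N%:R : R).
Proof.
rewrite -val_eqE /= => ij; have iN := ltn_ord i; have jN := ltn_ord j.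
have N_gt0 : 0 < N%:R :> R by rewrite ltr0n; lia.
have [n ->] := distZ_attained (i%:R / N%:R - j%:R / N%:R : R).
rewrite (_ : _ - _ - _ = (i%:Z - j%:Z - n * N%:Z)%:~R / N%:R); last first.
  by rewrite !(intrB, intrM) -!pmulrn; field; rewrite gt_eqF.
rewrite normrM normfV (gtr0_norm N_gt0) mulrCA mulfV ?gt_eqF // mulr1.
rewrite -intr_norm ler1z.
have : (n <= -1 \/ n = 0 \/ 1 <= n)%R by lia.
case=> [n_le|[n0|n_ge]].
- have : (n * N%:Z <= - N%:Z)%R by nia.
  lia.
- lia.
- have : (N%:Z <= n * N%:Z)%R by nia.
  lia.
Qed.

Lemma d1_far (tau c A : R) (z w z' w' : T1 R) : 0 <= tau ->
    c <= tau * d1 z' w' -> tau * d1 z z' <= A -> tau * d1 w w' <= A ->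
  c - 2 * A <= tau * d1 z w.
Proof.
move=> tau_ge0 far z_near w_near.
have tri := le_trans (d1_triangle z' z w') (lerD (lexx _) (d1_triangle z w w')).
by rewrite (d1C z' z) in tri; have := ler_wpM2l tau_ge0 tri; rewrite !mulrDr; lra.
Qed.

Lemma grid_far (N : nat) (tau c A : R) (p q : T2 R) (u v : 'I_N * 'I_N) :
    0 < tau -> 0 <= c -> N%:R * c <= tau -> u != v ->
    tau * d2 p (grid u) <= A -> tau * d2 q (grid v) <= A ->
  c - 2 * A <= tau * d2 p q.
Proof.
move=> tau_gt0 c_ge0 Nc uv p_near q_near; have tau_ge0 := ltW tau_gt0.
have coord_far (i j : 'I_N) : i != j ->
    c <= tau * d1 (tpt (i%:R / N%:R)) (tpt (j%:R / N%:R)).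
  move=> /grid_sep sep; rewrite d1_tpt -[X in X <= _]mulr1.
  apply: le_trans (ler_wpM2l c_ge0 sep) _; rewrite mulrA [c * _]mulrC.
  by apply: ler_wpM2r; rewrite ?distZ_ge0.
have near1 r (x : T2 R) : tau * d2 r x <= A -> tau * d1 r.1 x.1 <= A.
  by apply: le_trans; apply: ler_wpM2l; rewrite ?d1_fst_le_d2.
have near2 r (x : T2 R) : tau * d2 r x <= A -> tau * d1 r.2 x.2 <= A.
  by apply: le_trans; apply: ler_wpM2l; rewrite ?d1_snd_le_d2.
have [ne1|ne2] : u.1 != v.1 \/ u.2 != v.2.
  by move: uv; rewrite -pair_eqE /= negb_and => /orP.
- apply: le_trans (ler_wpM2l tau_ge0 (d1_fst_le_d2 p q)).
  exact: d1_far tau_ge0 (coord_far _ _ ne1) (near1 _ _ p_near) (near1 _ _ q_near).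
- apply: le_trans (ler_wpM2l tau_ge0 (d1_snd_le_d2 p q)).
  exact: d1_far tau_ge0 (coord_far _ _ ne2) (near2 _ _ p_near) (near2 _ _ q_near).
Qed.

End Packing.

Arguments grid {R} N u.

Section IntegerMultiples.
Variable R : realType.
Implicit Types (x : R) (j k m n s : int).

Lemma distZ_sign s x : s ^+ 2 = 1 -> distZ (s%:~R * x) = distZ x.
Proof.
rewrite expr2 => s2; have [->|->] : s = 1 \/ s = -1 by nia.
  by rewrite mul1r.
by rewrite mulN1r distZN.
Qed.

Lemma distZ_intM_le (alpha : R) k m j n x :
  distZ (k%:~R * x) <=
  `|j%:~R| * `|k%:~R * alpha + m%:~R| + `|k%:~R| * `|x - j%:~R * alpha - n%:~R|.
Proof.
rewrite -!normrM -(distZDz _ (j * m - k * n)).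
rewrite [X in distZ X](_ : _ = j%:~R * (k%:~R * alpha + m%:~R) +
                              k%:~R * (x - j%:~R * alpha - n%:~R)); last first.
  by rewrite !intrB !intrM; ring.
exact: le_trans (distZ_le_norm _) (ler_normD _ _).
Qed.

Lemma norm_comb_le (X Y c1 c2 b1 b2 : R) : `|c1| <= b1 -> `|c2| <= b2 ->
  `|X * c1 + Y * c2| <= `|X| * b1 + `|Y| * b2.
Proof.
move=> c1_le c2_le; apply: le_trans (ler_normD _ _) _; rewrite !normrM.
by apply: lerD; apply: ler_wpM2l.
Qed.

End IntegerMultiples.

Definition unimodular (k1 m1 k2 m2 : int) : Prop := (k1 * m2 - k2 * m1) ^+ 2 = 1.

(* The vectors (k_i, t (k_i alpha + m_i)) form a basis of the lattice
   {(j, t (j alpha + m))} and have sup norm at most B_i. *)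
Definition adapted (R : realType) (alpha t B1 B2 : R) (k1 m1 k2 m2 : int) :=
  [/\ unimodular k1 m1 k2 m2, `|k1%:~R| <= B1, `|k2%:~R| <= B2,
      t * `|k1%:~R * alpha + m1%:~R| <= B1 & t * `|k2%:~R * alpha + m2%:~R| <= B2].

Section RectangularModel.
Variables (R : realType) (alpha t B1 B2 K : R) (k1 m1 k2 m2 : int).
Hypotheses (t_gt0 : 0 < t) (B1_gt0 : 0 < B1) (B2_gt0 : 0 < B2).
Hypothesis basis : adapted alpha t B1 B2 k1 m1 k2 m2.
Hypothesis area : B1 * B2 <= K * t.
Implicit Types (x y : R) (z w : T1 R).

Local Notation det := (k1 * m2 - k2 * m1).
Local Notation E1 := (k1%:~R * alpha + m1%:~R).
Local Notation E2 := (k2%:~R * alpha + m2%:~R).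

(* (coord1 x, coord2 x) are the coordinates of (0, x) in the basis
   (k_i, k_i alpha + m_i); the determinant is its own inverse. *)
Definition coord1 x : R := (- (k2 * det))%:~R * x.
Definition coord2 x : R := (k1 * det)%:~R * x.

Lemma coord1D x y : coord1 (x + y) = coord1 x + coord1 y.
Proof. exact: mulrDr. Qed.

Lemma coord2D x y : coord2 (x + y) = coord2 x + coord2 y.
Proof. exact: mulrDr. Qed.

Lemma coord1N x : coord1 (- x) = - coord1 x.
Proof. exact: mulrN. Qed.

Lemma coord2N x : coord2 (- x) = - coord2 x.
Proof. exact: mulrN. Qed.

Definition rect_norm x : R := B1 * distZ (coord1 x) + B2 * distZ (coord2 x).

Lemma det_sqr : (det%:~R : R) ^+ 2 = 1.
Proof. by case: basis => det1 _ _ _ _; rewrite expr2 -intrM -expr2 det1. Qed.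

Lemma distZ_coord1 x : distZ (coord1 x) = distZ (k2%:~R * x).
Proof.
case: basis => det1 _ _ _ _.
rewrite /coord1 (_ : - (k2 * det) = - det * k2); last by ring.
by rewrite intrM -mulrA distZ_sign // sqrrN.
Qed.

Lemma distZ_coord2 x : distZ (coord2 x) = distZ (k1%:~R * x).
Proof.
case: basis => det1 _ _ _ _; rewrite /coord2 (_ : k1 * det = det * k1); last by ring.
by rewrite intrM -mulrA distZ_sign.
Qed.

Lemma K_gt0 : 0 < K.
Proof. by rewrite -(pmulr_lgt0 _ t_gt0); apply: lt_le_trans area; rewrite mulr_gt0. Qed.

Lemma area_bounds : [/\ B1 * `|E2| <= K, B2 * `|E1| <= K,
  B1 * `|k2%:~R| <= K * t & B2 * `|k1%:~R| <= K * t].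
Proof.
case: basis => _ k1_le k2_le E1_le E2_le.
split; rewrite -?(ler_pM2l t_gt0 _ K) ?(mulrCA t) ?[t * K]mulrC; apply: le_trans area.
- by apply: ler_wpM2l; first exact: ltW.
- by rewrite [B1 * _]mulrC; apply: ler_wpM2l; first exact: ltW.
- by apply: ler_wpM2l; first exact: ltW.
- by rewrite [B1 * _]mulrC; apply: ler_wpM2l; first exact: ltW.
Qed.

Lemma rect_norm_ge0 x : 0 <= rect_norm x.
Proof. by rewrite addr_ge0 // mulr_ge0 ?distZ_ge0 // ltW. Qed.

Lemma rect_norm0 : rect_norm 0 = 0.
Proof. by rewrite /rect_norm /coord1 /coord2 !mulr0 distZ0 !mulr0 addr0. Qed.

Lemma rect_normN x : rect_norm (- x) = rect_norm x.
Proof. by rewrite /rect_norm coord1N coord2N !distZN. Qed.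

Lemma rect_normD_le x y : rect_norm (x + y) <= rect_norm x + rect_norm y.
Proof.
rewrite /rect_norm coord1D coord2D.
have le1 := ler_wpM2l (ltW B1_gt0) (distZD_le (coord1 x) (coord1 y)).
have le2 := ler_wpM2l (ltW B2_gt0) (distZD_le (coord2 x) (coord2 y)).
by rewrite mulrDr in le1 le2; lra.
Qed.

Lemma rect_norm_eq0 x : rect_norm x = 0 -> exists n : int, x = n%:~R.
Proof.
have ge0_1 := mulr_ge0 (ltW B1_gt0) (distZ_ge0 (coord1 x)).
have ge0_2 := mulr_ge0 (ltW B2_gt0) (distZ_ge0 (coord2 x)).
rewrite /rect_norm => eq0.
have /eqP : B1 * distZ (coord1 x) = 0 by lra.
rewrite mulf_eq0 (gt_eqF B1_gt0) => /eqP /distZ_eq0 [p c1x].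
have /eqP : B2 * distZ (coord2 x) = 0 by lra.
rewrite mulf_eq0 (gt_eqF B2_gt0) => /eqP /distZ_eq0 [r c2x].
exists (m2 * r + m1 * p); rewrite intrD !intrM -c1x -c2x /coord1 /coord2.
case: basis => det1 _ _ _ _.
have det_unit : m2 * (k1 * det) + m1 * - (k2 * det) = 1 by rewrite -det1; ring.
by rewrite !mulrA -!intrM -mulrDl -intrD det_unit mul1r.
Qed.

Lemma rect_norm_gt0 z w : z <> w -> 0 < rect_norm (sval z - sval w).
Proof.
move=> zw; rewrite lt_def rect_norm_ge0 andbT; apply/eqP => /rect_norm_eq0 [n zwE].
have z0 := T1_ge0 z; have z1 := T1_lt1 z; have w0 := T1_ge0 w; have w1 := T1_lt1 w.
have : `|n%:~R| < 1 :> R.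
  by rewrite -zwE ltr_norml; apply/andP; split; lra.
rewrite -intr_norm ltrz1 => n_small; have n0 : n = 0 by lia.
by apply/zw/val_inj/eqP; rewrite -subr_eq0 zwE n0.
Qed.

Lemma warped_le_rect_norm z w :
  warped_dist alpha t z w <= 2 * rect_norm (sval w - sval z).
Proof.
case: basis => _ k1_le k2_le E1_le E2_le; set x := sval w - sval z.
have [p c1E] := distZ_attained (coord1 x); have [r c2E] := distZ_attained (coord2 x).
set X := coord1 x - p%:~R; set Y := coord2 x - r%:~R.
(* Jump to the lattice point p v1 + r v2 nearest to (0, t x), where
   v_i = (k_i, t E_i); then (0, t x) - (p v1 + r v2) = X v1 + Y v2. *)
apply: le_trans (warped_dist_le alpha t_gt0 z w (p * k1 + r * k2)) _.
have jumpE : (p * k1 + r * k2)%:~R = - (X * k1%:~R + Y * k2%:~R) :> R.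
  by rewrite /X /Y /coord1 /coord2 !(intrD, intrM, intrN); ring.
have restE : x - (p * k1 + r * k2)%:~R * alpha - (p * m1 + r * m2)%:~R =
    X * E1 + Y * E2.
  rewrite {1}(_ : x = det%:~R ^+ 2 * x); last by rewrite det_sqr mul1r.
  by rewrite /X /Y /coord1 /coord2 !(intrD, intrB, intrM, intrN); ring.
have jump_le : `|(p * k1 + r * k2)%:~R| <= `|X| * B1 + `|Y| * B2 :> R.
  by rewrite jumpE normrN norm_comb_le.
have rest_le : t * distZ (x - (p * k1 + r * k2)%:~R * alpha) <= `|X| * B1 + `|Y| * B2.
  apply: le_trans (_ : t * `|X * E1 + Y * E2| <= _).
    by rewrite ler_pM2l // -restE distZ_le.
  rewrite -[t]gtr0_norm // -normrM mulrDr mulrCA [t * (Y * _)]mulrCA.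
  by apply: norm_comb_le; rewrite normrM gtr0_norm.
by rewrite /rect_norm c1E c2E -/X -/Y; lra.
Qed.

Lemma rect_norm_le_jump x (j : int) :
  rect_norm x <= 2 * K * (`|j%:~R| + t * distZ (x - j%:~R * alpha)).
Proof.
have [n ->] := distZ_attained (x - j%:~R * alpha).
have [B1E2 B2E1 B1k2 B2k1] := area_bounds.
have le1 := ler_wpM2l (ltW B1_gt0) (distZ_intM_le alpha k2 m2 j n x).
have le2 := ler_wpM2l (ltW B2_gt0) (distZ_intM_le alpha k1 m1 j n x).
have p1 := ler_wpM2l (normr_ge0 (j%:~R : R)) B1E2.
have p2 := ler_wpM2l (normr_ge0 (j%:~R : R)) B2E1.
have p3 := ler_wpM2r (normr_ge0 (x - j%:~R * alpha - n%:~R)) B1k2.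
have p4 := ler_wpM2r (normr_ge0 (x - j%:~R * alpha - n%:~R)) B2k1.
rewrite !mulrDr in le1 le2.
by rewrite /rect_norm distZ_coord1 distZ_coord2; lra.
Qed.

Definition rect_dist z w : R := rect_norm (sval z - sval w) / (2 * K).

Lemma rect_dist_admissible : warp_admissible alpha t rect_dist.
Proof.
have K2_gt0 : 0 < 2 * K by rewrite mulr_gt0 // K_gt0.
have le_div x c : rect_norm x <= 2 * K * c -> rect_norm x / (2 * K) <= c.
  by rewrite ler_pdivrMr // mulrC.
have rot_le (j : int) z : rect_norm (sval z - sval (rot alpha j z)) <= 2 * K * `|j%:~R|.
  by rewrite -rect_normN opprB (le_trans (rect_norm_le_jump _ j)) // distZ_rot mulr0 addr0.
split; [split; [|split; [|split]]|split].
- by move=> z; rewrite /rect_dist subrr rect_norm0 mul0r.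
- by move=> z w zw; rewrite divr_gt0 ?rect_norm_gt0.
- by move=> z w; rewrite /rect_dist -rect_normN opprB.
- move=> z w u; rewrite /rect_dist -mulrDl ler_pM2r ?invr_gt0 //.
  by rewrite (_ : _ - _ = (sval z - sval w) + (sval w - sval u)) ?rect_normD_le //; ring.
- move=> z w; apply: le_div; rewrite d1E.
  by have := rect_norm_le_jump (sval z - sval w) 0; rewrite normr0 add0r mul0r subr0.
- move=> z; split; apply: le_div; [have := rot_le 1 z | have := rot_le (-1) z].
    by rewrite mulr1z normr1.
  by rewrite mulrN1z normrN normr1.
Qed.

Lemma rect_norm_le_warped z w :
  rect_norm (sval z - sval w) <= 2 * K * warped_dist alpha t z w.
Proof.
have K2_gt0 : 0 < 2 * K by rewrite mulr_gt0 // K_gt0.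
rewrite mulrC -ler_pdivrMr //; exact: admissible_le_warped_dist rect_dist_admissible.
Qed.

Lemma rect_cover x y : exists z : T1 R,
  B1 * distZ (coord1 (sval z) - x) + B2 * distZ (coord2 (sval z) - y) <= 2 * K.
Proof.
case: basis => det1 _ _ _ _; have [B1E2 B2E1 _ _] := area_bounds.
set n := Num.floor (x * k1%:~R + y * k2%:~R).
set e := x * k1%:~R + y * k2%:~R - n%:~R.
have e_ge0 : 0 <= e by rewrite subr_ge0 floor_le.
have e_lt1 : e < 1.
  by have := floorD1_gt (x * k1%:~R + y * k2%:~R); rewrite -/n intrD /e; lra.
(* x v1 + y v2 - n (1, t alpha) = (e, t z0), with v_i = (k_i, t E_i). *)
set z0 := x * E1 + y * E2 - n%:~R * alpha.
exists (tpt z0); have [i /= ->] := frac_shift z0.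
have c1E : coord1 (z0 + i%:~R) - x =
    - (det%:~R * (e * E2)) + (- (k2 * det * i + det * n * m2))%:~R.
  apply/eqP; rewrite -subr_eq0; apply/eqP.
  transitivity ((det%:~R ^+ 2 - 1) * x); last by rewrite det_sqr subrr mul0r.
  by rewrite /coord1 /e /z0 !(intrD, intrB, intrM, intrN); ring.
have c2E : coord2 (z0 + i%:~R) - y =
    det%:~R * (e * E1) + (k1 * det * i + det * n * m1)%:~R.
  apply/eqP; rewrite -subr_eq0; apply/eqP.
  transitivity ((det%:~R ^+ 2 - 1) * y); last by rewrite det_sqr subrr mul0r.
  by rewrite /coord2 /e /z0 !(intrD, intrB, intrM, intrN); ring.
have eE_le (E : R) : distZ (det%:~R * (e * E)) <= `|E|.
  rewrite distZ_sign //; apply: le_trans (distZ_le_norm _) _.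
  by rewrite normrM ger0_norm // ler_piMl // ltW.
rewrite c1E c2E !distZDz distZN.
have := ler_wpM2l (ltW B1_gt0) (eE_le E2); have := ler_wpM2l (ltW B2_gt0) (eE_le E1).
lra.
Qed.

Definition to_torus z : T2 R := (tpt (coord1 (sval z)), tpt (coord2 (sval z))).

Lemma rect_norm_to_torus z w : rect_norm (sval z - sval w) =
  B1 * d1 (to_torus z).1 (to_torus w).1 + B2 * d1 (to_torus z).2 (to_torus w).2.
Proof. by rewrite /rect_norm !d1_tpt coord1D coord2D coord1N coord2N. Qed.

Lemma to_torus_qi (tau c : R) : 0 < tau -> tau <= B1 -> tau <= B2 ->
    B1 <= c * tau -> B2 <= c * tau ->
  qi_map (warped_dist alpha t) (fun p q => tau * d2 p q) (4 * (c + K)) (2 * K) to_torus.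
Proof.
move=> tau_gt0 tau_B1 tau_B2 B1_c B2_c; have K_gt0 := K_gt0.
have c_gt0 : 0 < c by rewrite -(pmulr_lgt0 _ tau_gt0) (lt_le_trans B1_gt0).
split => [z w|[y1 y2]].
- have W_le := warped_le_rect_norm z w; have W_ge := rect_norm_le_warped z w.
  have W_ge0 := warped_dist_ge0 alpha t z w.
  rewrite -rect_normN opprB in W_le.
  have := scaled_d2_le_rect (to_torus z) (to_torus w) (ltW tau_gt0) tau_B1 tau_B2.
  have := rect_le_scaled_d2 (to_torus z) (to_torus w) (ltW B1_gt0) B1_c B2_c.
  rewrite -!rect_norm_to_torus => rect_le d2_le; apply/andP; split.
    rewrite lerBlDr ler_pdivrMl ?mulr_gt0 ?addr_gt0 //.
    by have := mulr_ge0 (ltW tau_gt0) (d2_ge0 (to_torus z) (to_torus w)); nra.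
  by have := mulr_ge0 (ltW c_gt0) W_ge0; lra.
- have [z cover] := rect_cover (sval y1) (sval y2); exists z.
  apply: le_trans (scaled_d2_le_rect _ _ (ltW tau_gt0) tau_B1 tau_B2) _.
  by rewrite !d1_tptl.
Qed.

Lemma warped_far_pair : exists z0 z1, B2 / (4 * K) - 2 <= warped_dist alpha t z0 z1.
Proof.
have K_gt0 := K_gt0.
have [z0 near0] := rect_cover 0 0; have [z1 near1] := rect_cover 0 2^-1.
exists z0, z1; set c0 := coord2 (sval z0) in near0; set c1 := coord2 (sval z1) in near1.
have half_le : 2^-1 <= distZ (c0 - c1) + distZ (c0 - 0) + distZ (c1 - 2^-1).
  have := distZD_le (c1 - c0 + (c0 - 0)) (2^-1 - c1).
  have := distZD_le (c1 - c0) (c0 - 0).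
  rewrite (distZB c1 c0) (distZB 2^-1 c1).
  by rewrite (_ : c1 - c0 + (c0 - 0) + (2^-1 - c1) = 2^-1) ?distZ_half; [lra | ring].
have B2_half := ler_wpM2l (ltW B2_gt0) half_le; rewrite !mulrDr in B2_half.
have ge0_0 := mulr_ge0 (ltW B1_gt0) (distZ_ge0 (coord1 (sval z0) - 0)).
have ge0_1 := mulr_ge0 (ltW B1_gt0) (distZ_ge0 (coord1 (sval z1) - 0)).
have ge0_01 := mulr_ge0 (ltW B1_gt0) (distZ_ge0 (coord1 (sval z0 - sval z1))).
have := rect_norm_le_warped z0 z1.
rewrite /rect_norm coord2D coord2N -/c0 -/c1 => W_ge.
rewrite (_ : _ - 2 = (B2 / 2 - 4 * K) / (2 * K)); last by field; rewrite gt_eqF.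
by rewrite ler_pdivrMr ?mulr_gt0 //; lra.
Qed.

Section QuasiIsometryToTorus.
Variables (tau C A : R) (f : T1 R -> T2 R).
Hypotheses (tau_gt0 : 0 < tau) (C_gt0 : 0 < C).
Hypothesis f_qi : qi_map (warped_dist alpha t) (fun p q => tau * d2 p q) C A f.

Lemma qi_scale_ge : B2 / (4 * K) - 2 <= C * (tau + A).
Proof.
have [z0 [z1 far]] := warped_far_pair; have /andP[lower _] := f_qi.1 z0 z1.
have : tau * d2 (f z0) (f z1) <= tau.
  by rewrite -[X in _ <= X]mulr1 ler_pM2l // d2_le1.
move=> d2_le; have : C^-1 * warped_dist alpha t z0 z1 <= tau + A by lra.
by rewrite ler_pdivrMl //; apply: le_trans far.
Qed.

Lemma qi_grid_card (N : nat) : N%:R * (3 * A + 4 * C) <= tau ->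
  (N * N <= (Num.truncn B1).+1 * (Num.truncn B2).+1)%N.
Proof.
move=> Nc_le; have d_ge0 p q : 0 <= tau * d2 p q by rewrite mulr_ge0 ?d2_ge0 // ltW.
have A_ge0 : 0 <= A := qi_map_A_ge0 (tpt 0, tpt 0) d_ge0 f_qi.
have c_gt0 : 0 < 3 * A + 4 * C by rewrite ltr_wpDl ?mulr_ge0 ?mulr_gt0.
have [X X_near] := choice (fun u : 'I_N * 'I_N => f_qi.2 (grid N u)).
have := separated_card_le (x := fun u : 'I_N * 'I_N => coord1 (sval (X u)))
  (y := fun u => coord2 (sval (X u))) (ltW B1_gt0) (ltW B2_gt0).
rewrite card_prod !card_ord; apply => u v uv.
have far := grid_far tau_gt0 (ltW c_gt0) Nc_le uv (X_near u) (X_near v).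
have /andP[_ upper] := f_qi.1 (X u) (X v).
have W_ge4 : 4 <= warped_dist alpha t (X u) (X v).
  by rewrite -(ler_pM2l C_gt0); lra.
have := warped_le_rect_norm (X u) (X v).
by rewrite -rect_normN opprB /rect_norm coord1D coord2D coord1N coord2N; lra.
Qed.

End QuasiIsometryToTorus.

End RectangularModel.

Section ContinuedFraction.
Variables (R : realType) (alpha : R).

Local Notation x n := (cf_rem alpha n).
Local Notation a n := (cf_digit alpha n).

Fixpoint cf_seq (u0 u1 : int) (n : nat) : int * int :=
  if n is n'.+1 then let: (v0, v1) := cf_seq u0 u1 n' in (v1, a n'.+1 * v1 + v0)
  else (u0, u1).

(* For 0 < alpha < 1 (so that p_0 = a_0 = 0), [cf_num n.+1 / cf_den n.+1] is
   the n-th convergent p_n / q_n of [alpha]; index 0 holds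
   (p_(-1), q_(-1)) = (1, 0). *)
Definition cf_den n := (cf_seq 0 1 n).1.
Definition cf_num n := (cf_seq 1 0 n).1.
Definition cf_err n : R := (cf_den n)%:~R * alpha - (cf_num n)%:~R.
Definition cf_rem_prod n : R := \prod_(i < n) x i.

Lemma cf_seqSS u0 u1 n :
  (cf_seq u0 u1 n.+2).1 = a n.+1 * (cf_seq u0 u1 n.+1).1 + (cf_seq u0 u1 n).1.
Proof. by rewrite /=; case: (cf_seq u0 u1 n). Qed.

Lemma cf_denSS n : cf_den n.+2 = a n.+1 * cf_den n.+1 + cf_den n.
Proof. exact: cf_seqSS. Qed.

Lemma cf_numSS n : cf_num n.+2 = a n.+1 * cf_num n.+1 + cf_num n.
Proof. exact: cf_seqSS. Qed.

Lemma cf_errSS n : cf_err n.+2 = (a n.+1)%:~R * cf_err n.+1 + cf_err n.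
Proof. by rewrite /cf_err cf_denSS cf_numSS !(intrD, intrM); ring. Qed.

Lemma unimodular_convergents n :
  unimodular (cf_den n) (- cf_num n) (cf_den n.+1) (- cf_num n.+1).
Proof.
rewrite /unimodular; elim: n => [//|n IHn].
by rewrite cf_denSS cf_numSS -IHn; ring.
Qed.

Lemma cf_remS n : x n.+1 = (x n)^-1 - (a n.+1)%:~R.
Proof. by []. Qed.

Lemma cf_rem_prodS n : cf_rem_prod n.+1 = cf_rem_prod n * x n.
Proof. by rewrite /cf_rem_prod big_ord_recr. Qed.

Hypotheses (alpha_gt0 : 0 < alpha) (alpha_lt1 : alpha < 1).
Hypothesis alpha_irr : Defs.irrational alpha.

Lemma cf_digit0 : a 0 = 0.
Proof. by rewrite /= (@floor_def _ _ 0) //= add0r (ltW alpha_gt0) alpha_lt1. Qed.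

Lemma cf_rem_ge0 n : 0 <= x n.
Proof. by case: n => [|n] /=; exact: frac_ge0. Qed.

Lemma cf_rem_lt1 n : x n < 1.
Proof. by case: n => [|n] /=; exact: frac_lt1. Qed.

(* Bundled because [x n != 0], needed for the next step, follows from the error
   formula and the irrationality of [alpha]. *)
Definition cf_invariant n := [/\ cf_err n = (-1) ^+ n.+1 * cf_rem_prod n,
  cf_err n.+1 = (-1) ^+ n.+2 * cf_rem_prod n.+1,
  0 <= cf_den n, cf_den n <= cf_den n.+1 & 1 <= cf_den n.+1].

Lemma cf_invariant_rem_neq0 n : cf_invariant n -> x n != 0.
Proof.
case=> _ errE _ _ den_ge1; apply/negP => /eqP rem0.
move: errE; rewrite cf_rem_prodS rem0 !mulr0 /cf_err => /eqP; rewrite subr_eq0 => /eqP errE.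
apply: alpha_irr; exists ((cf_num n.+1)%:Q / (cf_den n.+1)%:Q).
have den_neq0 : (cf_den n.+1)%:~R != 0 :> R by rewrite intr_eq0; lia.
by rewrite fmorph_div !rmorph_int -errE [_ * alpha]mulrC mulfK.
Qed.

Lemma cf_digit_ge1_of n : 0 < x n -> 1 <= a n.+1.
Proof.
move=> rem_gt0; rewrite /= floor_ge_int -[1%:~R]/(1 : R) invf_ge1 //.
exact/ltW/cf_rem_lt1.
Qed.

Lemma cf_invariantS n : cf_invariant n -> cf_invariant n.+1.
Proof.
move=> inv_n; have rem_neq0 := cf_invariant_rem_neq0 inv_n.
case: inv_n => err_n err_n1 den_ge0 den_le den_ge1.
have rem_gt0 : 0 < x n by rewrite lt_def rem_neq0 cf_rem_ge0.
have digit_ge1 := cf_digit_ge1_of rem_gt0.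
split => //; rewrite ?cf_denSS; try nia.
rewrite cf_errSS err_n1 err_n !cf_rem_prodS cf_remS !exprS.
by field.
Qed.

Lemma cf_invariant_all n : cf_invariant n.
Proof.
elim: n => [|n /cf_invariantS //]; split => //.
- by rewrite /cf_err /cf_den /cf_num /cf_rem_prod big_ord0 /=; ring.
- rewrite /cf_err /cf_den /cf_num cf_rem_prodS /cf_rem_prod big_ord0 /=.
  by rewrite frac_id ?(ltW alpha_gt0) //; ring.
Qed.

Lemma cf_rem_gt0 n : 0 < x n.
Proof. by rewrite lt_def (cf_invariant_rem_neq0 (cf_invariant_all n)) cf_rem_ge0. Qed.

Lemma cf_digit_ge1 n : 1 <= a n.+1.
Proof. exact/cf_digit_ge1_of/cf_rem_gt0. Qed.

Lemma cf_den_ge0 n : 0 <= cf_den n.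
Proof. by case: (cf_invariant_all n). Qed.

Lemma cf_den_le n : cf_den n <= cf_den n.+1.
Proof. by case: (cf_invariant_all n). Qed.

Lemma cf_den_ge1 n : 1 <= cf_den n.+1.
Proof. by case: (cf_invariant_all n). Qed.

Lemma norm_cf_err n : `|cf_err n| = cf_rem_prod n.
Proof.
case: (cf_invariant_all n) => -> _ _ _ _.
rewrite normrM normrX normrN normr1 expr1n mul1r ger0_norm //.
by rewrite /cf_rem_prod prodr_ge0 // => i _; rewrite cf_rem_ge0.
Qed.

Lemma cf_den_rem_prod n :
  (cf_den n.+1)%:~R * cf_rem_prod n + (cf_den n)%:~R * cf_rem_prod n.+1 = 1.
Proof.
elim: n => [|n IHn]; first by rewrite /cf_den /cf_rem_prod big_ord0 /=; ring.
rewrite cf_denSS !cf_rem_prodS -[X in _ = X]IHn cf_rem_prodS cf_remS.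
by rewrite !(intrD, intrM); field; rewrite gt_eqF ?cf_rem_gt0.
Qed.

Lemma cf_den_err_le1 n : (cf_den n.+1)%:~R * `|cf_err n| <= 1.
Proof.
rewrite norm_cf_err -[X in _ <= X](cf_den_rem_prod n) lerDl mulr_ge0 ?ler0z ?cf_den_ge0 //.
by rewrite /cf_rem_prod prodr_ge0 // => i _; rewrite cf_rem_ge0.
Qed.

Lemma cf_den_unbounded n : n%:Z <= cf_den n.+1.
Proof.
suff : n%:Z <= cf_den n.+1 /\ n.+1%:Z <= cf_den n.+2 by case.
elim: n => [|n [_ IHn]]; first by split; [exact: cf_den_ge0 | exact: cf_den_ge1].
split => //; rewrite cf_denSS; have := cf_digit_ge1 n.+1; have := cf_den_ge1 n.
nia.
Qed.

Lemma cf_den_bracket (s : R) : 1 <= s ->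
  exists n, (cf_den n.+1)%:~R <= s < (cf_den n.+2)%:~R.
Proof.
move=> s_ge1; apply: contrapT => no_bracket.
have below n : (cf_den n.+1)%:~R <= s.
  elim: n => [|n IHn]; first by rewrite /cf_den.
  by rewrite leNgt; apply/negP => above; apply: no_bracket; exists n; rewrite IHn.
have := below (Num.truncn s).+1; have := cf_den_unbounded (Num.truncn s).+1.
rewrite -(ler_int R) => unb; have := le_trans unb (below _).
by rewrite -pmulrn; have := truncnS_gt s; lra.
Qed.

Lemma convergents_adapted n (t B1 B2 : R) : 0 <= t ->
    (cf_den n.+1)%:~R <= B1 -> (cf_den n.+2)%:~R <= B2 ->
    t <= B1 * (cf_den n.+2)%:~R -> t <= B2 * (cf_den n.+2)%:~R ->
  adapted alpha t B1 B2 (cf_den n.+1) (- cf_num n.+1) (cf_den n.+2) (- cf_num n.+2).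
Proof.
move=> t_ge0 den1_le den2_le tB1 tB2.
have den2_gt0 : 0 < (cf_den n.+2)%:~R :> R by rewrite ltr0z; have := cf_den_ge1 n.+1; lia.
have err_le k (B : R) : (cf_den n.+2)%:~R * `|cf_err k| <= 1 ->
    t <= B * (cf_den n.+2)%:~R -> t * `|cf_err k| <= B.
  move=> errk tB; rewrite -(ler_pM2l den2_gt0) mulrCA [_ * B]mulrC.
  by apply: le_trans tB; rewrite -[X in _ <= X]mulr1 ler_wpM2l.
split; rewrite ?intrN; first exact: unimodular_convergents.
- by rewrite ger0_norm ?ler0z ?cf_den_ge0.
- by rewrite ger0_norm ?ler0z ?cf_den_ge0.
- exact/err_le/tB1/cf_den_err_le1.
- apply/err_le/tB2; apply: le_trans (cf_den_err_le1 n.+2).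
  by rewrite ler_wpM2r ?ler_int ?cf_den_le.
Qed.

Lemma bounded_digits_adapted n (G s : R) : 1 <= G -> (a n.+1)%:~R <= G - 1 ->
    (cf_den n.+1)%:~R <= s -> s < (cf_den n.+2)%:~R ->
  adapted alpha (s * s) (G * s) (G * s)
    (cf_den n.+1) (- cf_num n.+1) (cf_den n.+2) (- cf_num n.+2).
Proof.
move=> G_ge1 digit_le den1_le den2_gt.
have den1_ge0 : 0 <= (cf_den n.+1)%:~R :> R by rewrite ler0z cf_den_ge0.
have s_ge0 : 0 <= s by apply: le_trans den1_le.
have s_le : s <= G * s by rewrite ler_peMl.
apply: convergents_adapted; rewrite ?mulr_ge0 //.
- exact: le_trans den1_le s_le.
- have a_ge0 : 0 <= (a n.+1)%:~R :> R by rewrite ler0z (le_trans _ (cf_digit_ge1 n)).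
  have den0_le : (cf_den n)%:~R <= s.
    by apply: le_trans den1_le; rewrite ler_int cf_den_le.
  have := ler_pM a_ge0 den1_ge0 digit_le den1_le.
  by rewrite cf_denSS intrD intrM; lra.
- by rewrite ler_pM // ltW.
- by rewrite ler_pM // ltW.
Qed.

End ContinuedFraction.

Section QuasiIsometricFamilies.
Variable R : realType.

Lemma families_qiP (X Y : Type) (dX : R -> X -> X -> R) (dY : R -> Y -> Y -> R)
    (phi : R -> R) (C A : R) : 0 < C ->
    (forall t, 0 < t -> 0 < phi t) -> (forall s, 0 < s -> exists2 t, 0 < t & phi t = s) ->
    (forall t, 0 < t -> exists f, qi_map (dX t) (dY (phi t)) C A f) ->
  families_qi dX dY.
Proof.
move=> C_gt0 phi_gt0 phi_onto qi; exists {t : R | 0 < t}, sval, (fun i => phi (sval i)).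
split; first by case.
split; first by move=> t t_gt0; exists (exist _ t t_gt0).
split; first by case=> t t_gt0; exact: phi_gt0.
split; first by move=> s /phi_onto [t t_gt0 <-]; exists (exist _ t t_gt0).
by exists C, A; split => // -[t t_gt0]; exact: qi.
Qed.

Lemma qi_map_const (X Y : Type) (dX : X -> X -> R) (dY : Y -> Y -> R) (C A : R)
    (x0 : X) (y0 : Y) : 0 < C ->
    (forall x x', 0 <= dX x x' <= C * A) -> (forall y y', 0 <= dY y y' <= A) ->
  qi_map dX dY C A (fun _ => y0).
Proof.
move=> C_gt0 dX_le dY_le; split => [x x'|y]; last by exists x0; case/andP: (dY_le y0 y).
have /andP[dX_ge0 dX_CA] := dX_le x x'; have /andP[dY_ge0 dY_A] := dY_le y0 y0.
have : C^-1 * dX x x' <= A by rewrite ler_pdivrMl.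
by have := mulr_ge0 (ltW C_gt0) dX_ge0; rewrite /= => ? ?; apply/andP; split; lra.
Qed.

Lemma warped_small_scale_qi (alpha t C A : R) : 0 < t -> t < 1 -> 0 < C ->
    2^-1 <= C * A -> 1 <= A ->
  qi_map (warped_dist alpha t) (fun p q => Num.sqrt t * d2 p q) C A
    (fun _ => (tpt 0, tpt 0)).
Proof.
move=> t_gt0 t_lt1 C_gt0 CA_ge A_ge1.
have s_lt1 : Num.sqrt t < 1 by rewrite -sqrtr1 ltr_sqrt.
have s_ge0 := sqrtr_ge0 t.
apply: (qi_map_const (tpt 0) (tpt 0, tpt 0) C_gt0) => [z w|p q].
  have := warped_dist_le alpha t_gt0 z w 0; rewrite normr0 add0r => W_le.
  have := distZ_le_half (sval w - sval z - 0%:~R * alpha) => half.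
  by rewrite warped_dist_ge0 /=; nra.
by have := d2_le1 p q; rewrite mulr_ge0 ?d2_ge0 //=; nra.
Qed.

Lemma bounded_digits_qi (alpha : R) (M : int) :
    0 < alpha -> alpha < 1 -> Defs.irrational alpha ->
    (forall n, cf_digit alpha n <= M) ->
  families_qi (fun t => @warped_dist R alpha t) (fun tau (p q : T2 R) => tau * d2 p q).
Proof.
move=> alpha_gt0 alpha_lt1 alpha_irr digit_le.
pose G : R := 1 + `|M%:~R|; have G_ge1 : 1 <= G by rewrite lerDl.
have digitG n : (cf_digit alpha n)%:~R <= G - 1.
  by rewrite addrAC subrr add0r (le_trans _ (ler_norm _)) // ler_int.
have G2_ge1 : 1 <= G ^+ 2 by rewrite expr_ge1 // (le_trans ler01).
have C_gt0 : 0 < 4 * (G + G ^+ 2) by rewrite mulr_gt0 // addr_gt0; lra.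
apply: (families_qiP (phi := Num.sqrt) (A := 2 * G ^+ 2) C_gt0) => [t|s s_gt0|t t_gt0].
- by rewrite sqrtr_gt0.
- by exists (s ^+ 2); rewrite ?exprn_gt0 // sqrtr_sqr gtr0_norm.
case: (ltrP t 1) => [t_lt1|t_ge1].
  by eexists; apply: warped_small_scale_qi => //; nra.
have s_gt0 : 0 < Num.sqrt t by rewrite sqrtr_gt0.
have s_ge1 : 1 <= Num.sqrt t by rewrite -sqrtr1 ler_sqrt // ltW.
have [n /andP[den1_le den2_gt]] := cf_den_bracket alpha_gt0 alpha_lt1 alpha_irr s_ge1.
have := bounded_digits_adapted alpha_gt0 alpha_lt1 alpha_irr G_ge1 (digitG n.+1)
  den1_le den2_gt.
have st : Num.sqrt t * Num.sqrt t = t by rewrite -expr2 sqr_sqrtr // ltW.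
rewrite st => basis.
have Gs_gt0 : 0 < G * Num.sqrt t by rewrite mulr_gt0 //; lra.
have s_le : Num.sqrt t <= G * Num.sqrt t by rewrite ler_peMl // ltW.
have area : G * Num.sqrt t * (G * Num.sqrt t) <= G ^+ 2 * t.
  by rewrite mulrACA st expr2.
by eexists; exact: (to_torus_qi t_gt0 Gs_gt0 Gs_gt0 basis area s_gt0 s_le s_le).
Qed.

Lemma elongation_bounded (r B1 B2 tau C A : R) (N : nat) : 0 < C -> 0 <= A ->
    1 <= B1 -> r * B1 <= B2 ->
    B2 / 4 - 2 <= C * (tau + A) -> tau < N.+1%:R * (3 * A + 4 * C) ->
    (N * N <= (Num.truncn B1).+1 * (Num.truncn B2).+1)%N ->
  r < 16 * (4 * C * (3 * A + 4 * C)) ^+ 2 + 2 * (4 * C * (3 * A + 4 * C) + 4 * C * A + 8).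
Proof.
move=> C_gt0 A_ge0 B1_ge1 rB1 scale tau_lt card.
set c := 4 * C * (3 * A + 4 * C); have c_gt0 : 0 < c by rewrite !mulr_gt0 //; lra.
have CA_ge0 := mulr_ge0 (ltW C_gt0) A_ge0; have c2_ge0 := sqr_ge0 c.
rewrite ltNge; apply/negP => r_big; have r_gt0 : 0 < r by lra.
have B2_ge : r <= B2 by nra.
have B2_lt : B2 < 2 * c * N%:R.
  have : 4 * C * tau < 4 * C * (N.+1%:R * (3 * A + 4 * C)).
    by rewrite ltr_pM2l ?mulr_gt0.
  rewrite (_ : _ * (_ * _) = c * N%:R + c); last by rewrite /c -natr1; ring.
  by lra.
have N_gt0 : 0 < N%:R :> R.
  have c2_gt0 : 0 < 2 * c by rewrite mulr_gt0.
  by rewrite -(pmulr_rgt0 _ c2_gt0); lra.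
have NN_le : N%:R * N%:R <= 4 * (B1 * B2) :> R.
  have B2_ge1 : 1 <= B2 by lra.
  have : 0 <= (B1 - 1) * (B2 - 1) by rewrite mulr_ge0 // subr_ge0.
  rewrite -natrM => B12; apply: le_trans (_ : _ <= (B1 + 1) * (B2 + 1)) _; last by nra.
  apply: le_trans (_ : _ <= (Num.truncn B1).+1%:R * (Num.truncn B2).+1%:R) _.
    by rewrite -natrM ler_nat.
  by rewrite -!natr1 ler_pM ?addr_ge0 ?lerD2r ?truncn_le ?ler0n //; lra.
have B2_ge0 : 0 <= B2 by lra.
have s1 := ler_wpM2l (ltW r_gt0) NN_le.
have s2 := ler_wpM2r (mulr_ge0 (ler0n _ 4) B2_ge0) rB1.
have s3 := ltr_pM B2_ge0 B2_ge0 B2_lt B2_lt.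
have : r * (N%:R * N%:R) < 16 * c ^+ 2 * (N%:R * N%:R).
  have -> : 16 * c ^+ 2 * (N%:R * N%:R) = 4 * (2 * c * N%:R * (2 * c * N%:R)) by ring.
  by apply: le_lt_trans s1 _; lra.
by rewrite ltr_pM2r ?mulr_gt0 //; lra.
Qed.

End QuasiIsometricFamilies.

(* At some scale t the warped circle is a rectangular torus of eccentricity at
   least r. *)
Definition elongated (R : realType) (alpha : R) : Prop :=
  forall r : R, 0 < r -> exists (t B1 B2 : R) (k1 m1 k2 m2 : int),
    [/\ 0 < t, 1 <= B1, r * B1 <= B2, B1 * B2 <= t &
        adapted alpha t B1 B2 k1 m1 k2 m2].

Section Elongated.
Variables (R : realType) (alpha : R).

Lemma elongated_not_qi : elongated alpha ->
  ~ families_qi (fun t => @warped_dist R alpha t) (fun tau (p q : T2 R) => tau * d2 p q).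
Proof.
move=> elong [I [p [q [_ [p_onto [q_gt0 [_ [C [A [C_gt0 qi]]]]]]]]]].
have [i1 _] := p_onto 1 ltr01; have [f1 f1_qi] := qi i1.
have A_ge0 : 0 <= A.
  by apply: qi_map_A_ge0 (tpt 0, tpt 0) _ f1_qi => x y; rewrite mulr_ge0 ?d2_ge0 ?ltW.
have c_gt0 : 0 < 3 * A + 4 * C by lra.
pose c := 4 * C * (3 * A + 4 * C); have c_ge0 : 0 <= c by rewrite !mulr_ge0 ?ltW.
pose r := 16 * c ^+ 2 + 2 * (c + 4 * C * A + 8).
have r_gt0 : 0 < r.
  by have := sqr_ge0 c; have := mulr_ge0 (ltW C_gt0) A_ge0; rewrite /r; lra.
have [t [B1 [B2 [k1 [m1 [k2 [m2 [t_gt0 B1_ge1 rB1 area basis]]]]]]]] := elong r r_gt0.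
have [i pi] := p_onto t t_gt0; have [f f_qi] := qi i; rewrite pi in f_qi.
have B1_gt0 : 0 < B1 by lra.
have B2_gt0 : 0 < B2 by nra.
have area1 : B1 * B2 <= 1 * t by rewrite mul1r.
have scale := qi_scale_ge t_gt0 B1_gt0 B2_gt0 basis area1 (q_gt0 i) C_gt0 f_qi.
rewrite mulr1 in scale.
set N := Num.truncn (q i / (3 * A + 4 * C)).
have Nc_le : N%:R * (3 * A + 4 * C) <= q i.
  by rewrite -ler_pdivlMr // truncn_le divr_ge0 // ltW.
have tau_lt : q i < N.+1%:R * (3 * A + 4 * C) by rewrite -ltr_pdivrMr // truncnS_gt.
have card := qi_grid_card t_gt0 B1_gt0 B2_gt0 basis (q_gt0 i) C_gt0 f_qi Nc_le.
have := elongation_bounded C_gt0 A_ge0 B1_ge1 rB1 scale tau_lt card.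
by rewrite -/c -/r ltxx.
Qed.

Lemma rational_elongated (x : rat) : alpha = ratr x -> elongated alpha.
Proof.
move=> alphaE r r_gt0; set p := numq x; set d := denq x.
have [u [v]] := Bezoutz p d.
rewrite (_ : gcdz p d = 1); last by apply/eqP; exact: coprime_num_den.
move=> bezout; pose D : R := d%:~R; pose U : R := `|u%:~R|.
have D_ge1 : 1 <= D by rewrite ler1z; have := denq_gt0 x; lia.
have U_ge0 : 0 <= U := normr_ge0 _.
have E1 : d%:~R * alpha + (- p)%:~R = 0.
  by rewrite alphaE /ratr -/p -/d intrN mulrC mulfVK ?intr_eq0 ?denq_neq0 // subrr.
have Dalpha : D * alpha = p%:~R by apply/eqP; rewrite -subr_eq0 -intrN E1.
have D_neq0 : D != 0 by rewrite gt_eqF //; lra.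
have E2 : u%:~R * alpha + v%:~R = D^-1.
  apply: (mulIf D_neq0); rewrite mulVf // mulrDl -mulrA [alpha * D]mulrC Dalpha.
  by rewrite -!intrM -intrD bezout.
exists (D * (D * (r + U + 1))), D, (D * (r + U + 1)), d, (- p), u, v.
split => //; first by rewrite !mulr_gt0 //; lra.
- by rewrite mulrC ler_pM2l; lra.
split => //.
- by rewrite /unimodular (_ : d * v - u * - p = 1) ?expr1n // -bezout; ring.
- by rewrite ger0_norm // ler0z; have := denq_gt0 x; lia.
- have : 1 * (r + U + 1) <= D * (r + U + 1) by rewrite ler_pM2r; lra.
  by rewrite -/U; lra.
- by rewrite E1 normr0 mulr0; lra.
- rewrite E2 ger0_norm ?invr_ge0; last lra.
  by rewrite [D * (D * _)]mulrC mulrK // unitfE.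
Qed.

Lemma unbounded_digits_elongated : 0 < alpha -> alpha < 1 -> Defs.irrational alpha ->
  ~ (exists M : int, forall n, cf_digit alpha n <= M) -> elongated alpha.
Proof.
move=> alpha_gt0 alpha_lt1 alpha_irr unbounded r r_gt0.
have [n digit_big] : exists n, Num.ceil r < cf_digit alpha n.+1.
  apply: contrapT => small; apply: unbounded; exists (Num.ceil r) => -[|n].
    by rewrite cf_digit0 // -(ler_int R); have := ceil_ge r; lra.
  by rewrite leNgt; apply/negP => big; apply: small; exists n.
have Q1_ge1 : 1 <= (cf_den alpha n.+1)%:~R :> R by rewrite ler1z cf_den_ge1.
have Q0_ge0 : 0 <= (cf_den alpha n)%:~R :> R by rewrite ler0z cf_den_ge0.
have Q12 : (cf_den alpha n.+1)%:~R <= (cf_den alpha n.+2)%:~R :> R.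
  by rewrite ler_int cf_den_le.
have r_digit : r <= (cf_digit alpha n.+1)%:~R.
  by apply: le_trans (ceil_ge r) _; rewrite ler_int ltW.
exists ((cf_den alpha n.+1)%:~R * (cf_den alpha n.+2)%:~R),
  (cf_den alpha n.+1)%:~R, (cf_den alpha n.+2)%:~R.
exists (cf_den alpha n.+1), (- cf_num alpha n.+1).
exists (cf_den alpha n.+2), (- cf_num alpha n.+2).
split => //; first by rewrite mulr_gt0 //; lra.
- rewrite cf_denSS intrD intrM.
  by have := ler_wpM2r (ltW (lt_le_trans ltr01 Q1_ge1)) r_digit; lra.
apply: convergents_adapted => //; first by rewrite mulr_ge0 //; lra.
by rewrite ler_pM2r //; lra.
Qed.

End Elongated.

Theorem theoremA1 (R : realType) (alpha : R) (h0 : 0 < alpha) (h1 : alpha < 1) :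
  families_qi (fun t => @warped_dist R alpha t)
              (fun tau (p q : T2 R) => tau * d2 p q)
  <-> restricted alpha.
Proof.
split => [qi | [alpha_irr [M digit_le]]]; last exact: bounded_digits_qi digit_le.
have alpha_irr : Defs.irrational alpha.
  by move=> [x alphaE]; exact: elongated_not_qi (rational_elongated alphaE) qi.
split => //; apply: contrapT => unbounded.
exact: elongated_not_qi (unbounded_digits_elongated h0 h1 alpha_irr unbounded) qi.
Qed.
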